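(* For all $x\in\mathbb{C}\setminus\{0,\pm2i,\pm\sqrt2\,i\}$ and all integers $n\ge0$, \[ \sum_{k=0}^n\Big(\frac{2}{x^2+2}\Big)^kL_{2k}(x)=\frac{2^{n+1}}{x(x^2+2)^n}F_{2n+2}(x) \] and \[ \sum_{k=0}^n\Big(\frac{2}{x^2+2}\Big)^kF_{2k}(x)=\frac{x^2+2}{x(x^2+4)}\bigg(\Big(\frac{2}{x^2+2}\Big)^{n+1}L_{2n+2}(x)-2\bigg). \]
   Context: The Fibonacci polynomials $F_n(x)$ and Lucas polynomials $L_n(x)$ are defined by $F_0(x)=0$, $F_1(x)=1$, $L_0(x)=2$, $L_1(x)=x$ and $W_n(x)=xW_{n-1}(x)+W_{n-2}(x)$ for $n\ge2$ (for $W=F$ and $W=L$). Here $i=\sqrt{-1}$. *)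

From HB Require Import structures.
From mathcomp Require Import all_boot all_order all_algebra.
From mathcomp Require Import complex.
Set Implicit Arguments. Unset Strict Implicit. Unset Printing Implicit Defensive.
Import Order.TTheory GRing.Theory Num.Theory.
Local Open Scope ring_scope.

Fixpoint fibLuc_pair (R : comRingType) (a b : {poly R}) (n : nat)
  : {poly R} * {poly R} :=
  match n with
  | 0%N => (a, b)
  | n'.+1 => let p := fibLuc_pair a b n' in (p.2, 'X * p.2 + p.1)
  end.

Definition fibP (R : comRingType) (n : nat) : {poly R} :=
  (fibLuc_pair 0 1 n).1.
Definition lucP (R : comRingType) (n : nat) : {poly R} :=
  (fibLuc_pair 2%:R 'X n).1.

From HB Require Import structures.
From mathcomp Require Import all_boot all_order all_algebra.
From mathcomp Require Import complex.
From mathcomp Require Import ring.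
Set Implicit Arguments. Unset Strict Implicit. Unset Printing Implicit Defensive.
Import Order.TTheory GRing.Theory Num.Theory.
Local Open Scope ring_scope.

(* With y = x^2 + 2 and r = 2/y we have y r = 2, and L_m = 2 F_{m+1} - x F_m
   gives 2 F_{m+2} - y F_m = x L_m and 2 L_{m+2} - y L_m = x (x^2 + 4) F_m.
   Hence r^k x L_{2k} = y (r^{k+1} F_{2k+2} - r^k F_{2k}), and likewise for
   r^k x (x^2 + 4) F_{2k} with L in place of F, so both sums telescope.
   The excluded points are the zeros of x, x^2 + 2 and x^2 + 4. *)

Section FibonacciLucas.
Variable R : comNzRingType.

Lemma fibPSS n : fibP R n.+2 = 'X * fibP R n.+1 + fibP R n.
Proof. by []. Qed.

Lemma lucPSS n : lucP R n.+2 = 'X * lucP R n.+1 + lucP R n.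
Proof. by []. Qed.

Lemma lucP_fibP n : lucP R n = 2%:R * fibP R n.+1 - 'X * fibP R n.
Proof.
suff [] : lucP R n = 2%:R * fibP R n.+1 - 'X * fibP R n /\
          lucP R n.+1 = 2%:R * fibP R n.+2 - 'X * fibP R n.+1 by [].
elim: n => [|n [IHn IHn1]]; first by rewrite /fibP /lucP /=; split; ring.
split=> //; rewrite lucPSS IHn IHn1 (fibPSS n.+1) (fibPSS n); ring.
Qed.

Lemma fibP_step2 n :
  2%:R * fibP R n.+2 - ('X ^+ 2 + 2%:R) * fibP R n = 'X * lucP R n.
Proof. by rewrite lucP_fibP fibPSS; ring. Qed.

Lemma lucP_step2 n :
  2%:R * lucP R n.+2 - ('X ^+ 2 + 2%:R) * lucP R n
  = 'X * ('X ^+ 2 + 4%:R) * fibP R n.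
Proof. by rewrite !lucP_fibP !fibPSS; ring. Qed.

Lemma horner_fibP_step2 (x : R) n :
  2%:R * (fibP R n.+2).[x] - (x ^+ 2 + 2%:R) * (fibP R n).[x]
  = x * (lucP R n).[x].
Proof.
have := congr1 (horner^~ x) (fibP_step2 n).
by rewrite !(hornerD, hornerN, hornerM, hornerX, hornerXn, hornerMn, hornerC).
Qed.

Lemma horner_lucP_step2 (x : R) n :
  2%:R * (lucP R n.+2).[x] - (x ^+ 2 + 2%:R) * (lucP R n).[x]
  = x * (x ^+ 2 + 4%:R) * (fibP R n).[x].
Proof.
have := congr1 (horner^~ x) (lucP_step2 n).
by rewrite !(hornerD, hornerN, hornerM, hornerX, hornerXn, hornerMn, hornerC).
Qed.

End FibonacciLucas.

Lemma telescope_sumr_exp (R : comNzRingType) (b r : R) (w : nat -> R) n :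
  \sum_(0 <= k < n.+1) r ^+ k * (b * r * w k.+1 - b * w k)
  = b * (r ^+ n.+1 * w n.+1 - w 0%N).
Proof.
have /= := telescope_sumr (fun k => r ^+ k * w k) (leq0n n.+1).
rewrite expr0 mul1r => <-; rewrite mulr_sumr.
by apply: eq_bigr => k _; rewrite exprS; ring.
Qed.

Lemma sqr_add_sqr_eq0 (C : numClosedFieldType) (x c : C) :
  (x ^+ 2 + c ^+ 2 == 0) = (x == c * 'i) || (x == - (c * 'i)).
Proof.
have -> : x ^+ 2 + c ^+ 2 = (x - c * 'i) * (x + c * 'i).
  by rewrite -subr_sqr exprMn sqrCi mulrN1 opprK.
by rewrite mulf_eq0 subr_eq0 addr_eq0.
Qed.

Theorem corollary9 (R : rcfType) (x : R[i]) (n : nat) :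
  x != 0 -> x != 2%:R * 'i -> x != - (2%:R * 'i) ->
  x != sqrtC 2%:R * 'i -> x != - (sqrtC 2%:R * 'i) ->
  (\sum_(0 <= k < n.+1) (2%:R / (x ^+ 2 + 2%:R)) ^+ k * (lucP _ (2 * k)).[x]
     = 2%:R ^+ n.+1 / (x * (x ^+ 2 + 2%:R) ^+ n) * (fibP _ (2 * n + 2)).[x])
  /\
  (\sum_(0 <= k < n.+1) (2%:R / (x ^+ 2 + 2%:R)) ^+ k * (fibP _ (2 * k)).[x]
     = (x ^+ 2 + 2%:R) / (x * (x ^+ 2 + 4%:R)) *
       ((2%:R / (x ^+ 2 + 2%:R)) ^+ n.+1 * (lucP _ (2 * n + 2)).[x] - 2%:R)).
Proof.
move=> x0 x_2i x_N2i x_s2i x_Ns2i.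
have y0 : x ^+ 2 + sqrtC 2%:R ^+ 2 != 0.
  by rewrite sqr_add_sqr_eq0 negb_or x_s2i x_Ns2i.
have z0 : x ^+ 2 + 2%:R ^+ 2 != 0 by rewrite sqr_add_sqr_eq0 negb_or x_2i x_N2i.
rewrite sqrtCK in y0; rewrite -natrX in z0.
set y := x ^+ 2 + 2%:R in y0 *; set z := x ^+ 2 + 4%:R in z0 *.
set r := 2%:R / y.
have yr : y * r = 2%:R by rewrite mulrC divfK.
have tele w := telescope_sumr_exp y r w n.
split.
- have sum_luc : x * \sum_(0 <= k < n.+1) r ^+ k * (lucP _ (2 * k)).[x]
      = y * (r ^+ n.+1 * (fibP _ (2 * n.+1)).[x] - (fibP _ (2 * 0)).[x]).
    rewrite -(tele (fun k => (fibP _ (2 * k)).[x])) mulr_sumr.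
    apply: eq_bigr => k _.
    by rewrite mulrCA yr mulnSr addn2 horner_fibP_step2.
  have yn0 : y ^+ n != 0 by rewrite expf_neq0.
  apply: (mulfI x0); rewrite sum_luc muln0 horner0 mulnSr /r.
  by rewrite !exprS !expr_div_n; field; rewrite x0 y0 yn0.
- have sum_fib : x * z * \sum_(0 <= k < n.+1) r ^+ k * (fibP _ (2 * k)).[x]
      = y * (r ^+ n.+1 * (lucP _ (2 * n.+1)).[x] - (lucP _ (2 * 0)).[x]).
    rewrite -(tele (fun k => (lucP _ (2 * k)).[x])) mulr_sumr.
    apply: eq_bigr => k _.
    by rewrite mulrCA yr mulnSr addn2 horner_lucP_step2.
  apply: (mulfI (mulf_neq0 x0 z0)); rewrite sum_fib muln0 hornerMn -polyC1.
  by rewrite hornerC mulnSr; field; rewrite x0 z0.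
Qed.
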